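(* Let $\phi_1,\phi_2\in D=\{z\in\mathbb{C};|z|<1\}$ and let $Z$ be a random variable on the unit circle $\partial D$ with density, with respect to arc length, $$f(z)=\frac{1}{2\pi}\frac{|1-\phi_1\overline{\phi_2}|^2}{1-|\phi_1\overline{\phi_2}|^2}\frac{1-|\phi_1|^2}{|z-\phi_1|^2}\frac{1-|\phi_2|^2}{|z-\phi_2|^2}.$$ Then $E(Z)=0$ if and only if $\phi_1=-\phi_2$. *)

From Stdlib Require Import Reals.
From Coquelicot Require Import Coquelicot.
Open Scope R_scope.

Definition in_disc (z : C) : Prop := Cmod z < 1.

Definition cis (t : R) : C := (cos t, sin t).

Definition dens (phi1 phi2 : C) (z : C) : R :=
  (1 / (2 * PI)) *
  ((Cmod (1 - phi1 * Cconj phi2)%C) ^ 2 / (1 - (Cmod (phi1 * Cconj phi2)%C) ^ 2)) *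
  ((1 - Cmod phi1 ^ 2) / (Cmod (z - phi1)%C) ^ 2) *
  ((1 - Cmod phi2 ^ 2) / (Cmod (z - phi2)%C) ^ 2).

(* E(Z) = \int_{\partial D} z f(z) |dz| = \int_0^{2pi} e^{it} f(e^{it}) dt *)
Definition expect (phi1 phi2 : C) : C :=
  @RInt C_R_CompleteNormedModule (fun t : R => (RtoC (dens phi1 phi2 (cis t)) * cis t)%C) 0 (2 * PI).

From Stdlib Require Import Reals Lra Lia Psatz.
From Coquelicot Require Import Coquelicot.
Open Scope R_scope.

(* On the unit circle the Poisson kernel of [a] equals [A + conj A - 1] with
   [A z = 1 / (1 - conj(a) z)], so [z P_a P_b] is a combination of boundary
   values of functions holomorphic in the disc and of their conjugates, whose
   integrals over the circle are read off their values at 0.  The one analytic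
   input is that the moments of positive order of such a function vanish:
   multiplying by [1 / (1 - p z)] preserves this, because the moments [I_n] of
   the product satisfy [I_n = p I_(n+1)] and are bounded.  The result is
   E(Z) = c (b / (1 - conj(a) b) + a / (1 - a conj(b))) with [c > 0]; clearing
   denominators, this sum vanishes iff [a (1 - |b|^2) = -b (1 - |a|^2)], which
   forces [|a| = |b|] and then [a = -b]. *)

Lemma Cconj_R r : Cconj (RtoC r) = RtoC r.
Proof. unfold Cconj, RtoC; simpl. now rewrite Ropp_0. Qed.

Lemma one_sub_neq0 (w : C) : Cmod w < 1 -> (1 - w)%C <> RtoC 0.
Proof.
  intros Hw E. assert (Hw1 : w = RtoC 1).
  { replace w with (1 - (1 - w))%C by ring. rewrite E. ring. }
  rewrite Hw1, Cmod_1 in Hw. lra.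
Qed.

Lemma Cmod_mult_lt1 (p z : C) : Cmod p < 1 -> Cmod z <= 1 -> Cmod (p * z) < 1.
Proof. intros Hp Hz. rewrite Cmod_mult. pose proof (Cmod_ge_0 p). nra. Qed.

Lemma Cmult_eq0_iff_r (c x : C) : c <> RtoC 0 -> (c * x)%C = RtoC 0 <-> x = RtoC 0.
Proof.
  intros Hc. split; intros E.
  - replace x with (/ c * (c * x))%C by (field; exact Hc). rewrite E. apply Cmult_0_r.
  - rewrite E. apply Cmult_0_r.
Qed.

Lemma continuous_C_pair (f : R -> C) x :
  continuous (fun t => fst (f t)) x -> continuous (fun t => snd (f t)) x ->
  continuous f x.
Proof.
  intros H1 H2. apply filterlim_locally. intros eps.
  apply filterlim_locally with (eps := eps) in H1.
  apply filterlim_locally with (eps := eps) in H2.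
  generalize (filter_and _ _ H1 H2). apply filter_imp. now intros t [B1 B2].
Qed.

Lemma continuous_C_fst (f : R -> C) x :
  continuous f x -> continuous (fun t => fst (f t)) x.
Proof.
  intros H. apply filterlim_locally. intros eps.
  apply filterlim_locally with (eps := eps) in H.
  revert H. apply filter_imp. now intros t [B1 B2].
Qed.

Lemma continuous_C_snd (f : R -> C) x :
  continuous f x -> continuous (fun t => snd (f t)) x.
Proof.
  intros H. apply filterlim_locally. intros eps.
  apply filterlim_locally with (eps := eps) in H.
  revert H. apply filter_imp. now intros t [B1 B2].
Qed.

Lemma continuous_Rmult (f g : R -> R) x :
  continuous f x -> continuous g x -> continuous (fun t => f t * g t) x.
Proof. apply (continuous_mult (K:=R_AbsRing)). Qed.

Lemma continuous_Rplus (f g : R -> R) x :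
  continuous f x -> continuous g x -> continuous (fun t => f t + g t) x.
Proof. apply (continuous_plus (V:=R_NormedModule)). Qed.

Lemma continuous_Ropp (f : R -> R) x :
  continuous f x -> continuous (fun t => - f t) x.
Proof. apply (continuous_opp (V:=R_NormedModule)). Qed.

Lemma continuous_Rminus (f g : R -> R) x :
  continuous f x -> continuous g x -> continuous (fun t => f t - g t) x.
Proof. intros. apply continuous_Rplus; [|apply continuous_Ropp]; assumption. Qed.

Lemma continuous_Rpow (f : R -> R) n x :
  continuous f x -> continuous (fun t => f t ^ n) x.
Proof.
  intros Hf. induction n as [|n IH]; simpl.
  - apply continuous_const.
  - now apply continuous_Rmult.
Qed.

(* Dispatch on the syntactic shape of the goal: a failed [apply] would make
   unification unfold the real arithmetic operations, which is very slow. *)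
Ltac continuous_R :=
  repeat match goal with
  | |- continuous (fun _ => _ - _) _ => apply continuous_Rminus
  | |- continuous (fun _ => _ + _) _ => apply continuous_Rplus
  | |- continuous (fun _ => _ * _) _ => apply continuous_Rmult
  | |- continuous (fun _ => - _) _ => apply continuous_Ropp
  | |- continuous (fun _ => _ ^ _) _ => apply continuous_Rpow
  | |- continuous (fun _ => fst _) _ => apply continuous_C_fst; assumption
  | |- continuous (fun _ => snd _) _ => apply continuous_C_snd; assumption
  | |- continuous (fun _ => ?c) _ => apply continuous_const
  end.

Lemma continuous_Cplus (f g : R -> C) x :
  continuous f x -> continuous g x -> continuous (fun t => f t + g t)%C x.
Proof. intros Hf Hg. apply continuous_C_pair; simpl; continuous_R. Qed.

Lemma continuous_Cmult (f g : R -> C) x :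
  continuous f x -> continuous g x -> continuous (fun t => f t * g t)%C x.
Proof. intros Hf Hg. apply continuous_C_pair; simpl; continuous_R. Qed.

Lemma continuous_Cinv (f : R -> C) x :
  continuous f x -> f x <> 0%C -> continuous (fun t => / f t)%C x.
Proof.
  intros Hf Hfx.
  assert (Hd : fst (f x) ^ 2 + snd (f x) ^ 2 <> 0).
  { intro E. apply Hfx. destruct (f x) as [p q]. simpl in E.
    assert (p = 0) by nra. assert (q = 0) by nra. now subst. }
  apply continuous_C_pair; apply continuous_Rmult; try continuous_R;
    apply continuous_Rinv_comp; trivial; continuous_R.
Qed.

Lemma continuous_cis x : continuous cis x.
Proof.
  apply continuous_C_pair; simpl.
  - apply continuous_cos_comp, continuous_id.
  - apply continuous_sin_comp, continuous_id.
Qed.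

Lemma continuous_Cmod_bounded (h : R -> C) a b :
  a <= b -> (forall t, continuous h t) ->
  exists M, forall t, a <= t <= b -> Cmod (h t) <= M.
Proof.
  intros Hab Hh.
  destruct (continuity_ab_maj (fun t => Cmod (h t)) a b Hab) as [m [Hm _]].
  - intros c _. apply continuity_pt_filterlim. unfold Cmod.
    apply (continuous_sqrt_comp (fun t => fst (h t) ^ 2 + snd (h t) ^ 2)).
    specialize (Hh c). continuous_R.
  - now exists (Cmod (h m)).
Qed.

Lemma is_RInt_eq_val {V : NormedModule R_AbsRing} (f : R -> V) a b l l' :
  is_RInt f a b l -> l = l' -> is_RInt f a b l'.
Proof. now intros H <-. Qed.

(* Values of [is_RInt] are typed in the carrier of a normed module; [ring] and
   [field] only see the complex field once the equation is retyped at [C]. *)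
Ltac C_eq := match goal with |- ?x = ?y => change (@eq C x y) end.

Lemma is_RInt_Cplus (f g : R -> C) a b lf lg :
  is_RInt f a b lf -> is_RInt g a b lg -> is_RInt (fun t => f t + g t)%C a b (lf + lg)%C.
Proof. apply (is_RInt_plus (V:=C_R_NormedModule)). Qed.

Lemma is_RInt_Cminus (f g : R -> C) a b lf lg :
  is_RInt f a b lf -> is_RInt g a b lg -> is_RInt (fun t => f t - g t)%C a b (lf - lg)%C.
Proof. apply (is_RInt_minus (V:=C_R_NormedModule)). Qed.

Lemma is_RInt_Cmult_l (f : R -> C) a b l c :
  is_RInt f a b l -> is_RInt (fun t => c * f t)%C a b (c * l)%C.
Proof.
  intros H. destruct c as [c1 c2], l as [l1 l2].
  pose proof (is_RInt_fct_extend_fst (U:=R_NormedModule) (V:=R_NormedModule) _ _ _ _ H) as H1.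
  pose proof (is_RInt_fct_extend_snd (U:=R_NormedModule) (V:=R_NormedModule) _ _ _ _ H) as H2.
  apply (is_RInt_fct_extend_pair (U:=R_NormedModule) (V:=R_NormedModule)); simpl in *.
  - exact (is_RInt_minus _ _ _ _ _ _ (is_RInt_scal _ _ _ c1 _ H1) (is_RInt_scal _ _ _ c2 _ H2)).
  - exact (is_RInt_plus _ _ _ _ _ _ (is_RInt_scal _ _ _ c1 _ H2) (is_RInt_scal _ _ _ c2 _ H1)).
Qed.

Lemma is_RInt_Cconj (f : R -> C) a b l :
  is_RInt f a b l -> is_RInt (fun t => Cconj (f t)) a b (Cconj l).
Proof.
  intros H. destruct l as [l1 l2].
  pose proof (is_RInt_fct_extend_fst (U:=R_NormedModule) (V:=R_NormedModule) _ _ _ _ H) as H1.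
  pose proof (is_RInt_fct_extend_snd (U:=R_NormedModule) (V:=R_NormedModule) _ _ _ _ H) as H2.
  apply (is_RInt_fct_extend_pair (U:=R_NormedModule) (V:=R_NormedModule)); simpl in *.
  - exact H1.
  - exact (is_RInt_opp _ _ _ _ H2).
Qed.

Lemma is_RInt_Cconst (c : C) a b : is_RInt (fun _ => c) a b (RtoC (b - a) * c)%C.
Proof. rewrite <- scal_R_Cmult. apply (is_RInt_const (V:=C_R_NormedModule)). Qed.

Lemma is_RInt_C_continuous (f : R -> C) a b :
  (forall t, continuous f t) -> is_RInt f a b (RInt (V:=C_R_CompleteNormedModule) f a b).
Proof.
  intros Hf. apply (RInt_correct (V:=C_R_CompleteNormedModule)).
  apply (ex_RInt_continuous (V:=C_R_CompleteNormedModule)). now intros.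
Qed.

Lemma norm_C_R_Cmod (x : C) : norm (K:=R_AbsRing) (V:=C_R_NormedModule) x = Cmod x.
Proof.
  destruct x as [p q]. unfold norm; simpl. unfold prod_norm, Cmod; simpl. f_equal.
  unfold norm; simpl. unfold abs; simpl.
  rewrite !Rmult_1_r, <- !Rabs_mult, !Rabs_right; trivial; apply Rle_ge, Rle_0_sqr.
Qed.

Lemma is_RInt_Cmod_le (f : R -> C) a b l M :
  a <= b -> (forall t, a <= t <= b -> Cmod (f t) <= M) -> is_RInt f a b l ->
  Cmod l <= (b - a) * M.
Proof.
  intros Hab Hf Hl. rewrite <- norm_C_R_Cmod.
  apply (norm_RInt_le_const (V:=C_R_NormedModule) f a b l M Hab); trivial.
  intros t Ht. rewrite norm_C_R_Cmod. now apply Hf.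
Qed.

(** * Moments on the unit circle *)

Lemma Cmod_cis t : Cmod (cis t) = 1.
Proof.
  unfold Cmod, cis; simpl. rewrite !Rmult_1_r.
  replace (cos t * cos t + sin t * sin t) with 1 by (pose proof (sin2_cos2 t); unfold Rsqr in *; lra).
  apply sqrt_1.
Qed.

Lemma cis_neq0 t : cis t <> 0%C.
Proof. intro E. pose proof (Cmod_cis t) as H. rewrite E, Cmod_0 in H. lra. Qed.

Lemma Cconj_cis t : Cconj (cis t) = (/ cis t)%C.
Proof.
  pose proof (cis_neq0 t) as Hz.
  assert (H : (cis t * Cconj (cis t))%C = 1%C).
  { rewrite <- Cmod2_conj, Cmod_cis, pow1. reflexivity. }
  replace (Cconj (cis t)) with (/ cis t * (cis t * Cconj (cis t)))%C
    by (field; exact Hz).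
  rewrite H. apply Cmult_1_r.
Qed.

Lemma cis_pow t n : (cis t ^ n)%C = cis (INR n * t).
Proof.
  induction n as [|n IH].
  - simpl. unfold cis. rewrite Rmult_0_l, cos_0, sin_0. reflexivity.
  - rewrite Cpow_S, IH, S_INR. unfold cis, Cmult; simpl.
    replace ((INR n + 1) * t) with (t + INR n * t) by ring.
    rewrite cos_plus, sin_plus. apply injective_projections; simpl; ring.
Qed.

Lemma is_RInt_cis_pow n : (0 < n)%nat -> is_RInt (fun t => cis t ^ n)%C 0 (2 * PI) (RtoC 0).
Proof.
  intros Hn. assert (Hn' : INR n <> 0) by (apply not_0_INR; lia).
  assert (Hc : cos (INR n * (2 * PI)) = 1).
  { rewrite <- cos_0, <- (cos_period 0 n). f_equal. ring. }
  assert (Hs : sin (INR n * (2 * PI)) = 0).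
  { rewrite <- sin_0, <- (sin_period 0 n). f_equal. ring. }
  apply (is_RInt_ext (fun t => cis (INR n * t))).
  { intros t _. now rewrite cis_pow. }
  apply (is_RInt_fct_extend_pair (U:=R_NormedModule) (V:=R_NormedModule)); simpl.
  - eapply is_RInt_eq_val.
    + apply (is_RInt_derive (fun t => sin (INR n * t) / INR n)).
      * intros t _. auto_derive; trivial. field. exact Hn'.
      * intros t _. apply continuous_cos_comp.
        apply (continuous_scal_r (K:=R_AbsRing) (V:=R_NormedModule)), continuous_id.
    + rewrite Hs, Rmult_0_r, sin_0. unfold minus, plus, opp; simpl. field. exact Hn'.
  - eapply is_RInt_eq_val.
    + apply (is_RInt_derive (fun t => - cos (INR n * t) / INR n)).
      * intros t _. auto_derive; trivial. field. exact Hn'.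
      * intros t _. apply continuous_sin_comp.
        apply (continuous_scal_r (K:=R_AbsRing) (V:=R_NormedModule)), continuous_id.
    + rewrite Hc, Rmult_0_r, cos_0. unfold minus, plus, opp; simpl. field. exact Hn'.
Qed.

Lemma geometric_recurrence_bounded_eq0 (x : nat -> C) (p : C) (M : R) :
  Cmod p < 1 -> (forall k, x k = (p * x (S k))%C) -> (forall k, Cmod (x k) <= M) ->
  forall k, x k = RtoC 0.
Proof.
  intros Hp Hrec HM k.
  assert (Hiter : forall N, x k = (p ^ N * x (k + N)%nat)%C).
  { induction N as [|N IH].
    - rewrite Nat.add_0_r. simpl. ring.
    - rewrite IH, (Hrec (k + N)%nat), Nat.add_succ_r, Cpow_S. ring. }
  apply Cmod_eq_0, Rle_antisym; [| apply Cmod_ge_0].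
  assert (Hle : forall N, Cmod (x k) <= Cmod p ^ N * M).
  { intros N. rewrite (Hiter N), Cmod_mult, Cmod_pow.
    apply Rmult_le_compat_l; [apply pow_le, Cmod_ge_0 | apply HM]. }
  assert (Hlim : is_lim_seq (fun N => Cmod p ^ N * M) 0).
  { replace (Finite 0) with (Rbar_mult 0 M) by (simpl; f_equal; ring).
    apply is_lim_seq_scal_r, is_lim_seq_geom.
    rewrite Rabs_pos_eq; [exact Hp | apply Cmod_ge_0]. }
  exact (is_lim_seq_le (fun _ => Cmod (x k)) _ (Cmod (x k)) 0 Hle (is_lim_seq_const _) Hlim).
Qed.

Definition u (p : C) (t : R) : C := (/ (1 - p * cis t))%C.

Lemma u_denom_neq0 p t : Cmod p < 1 -> (1 - p * cis t)%C <> RtoC 0.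
Proof. intros Hp. apply one_sub_neq0, Cmod_mult_lt1; [exact Hp | rewrite Cmod_cis; lra]. Qed.

Lemma u_expand p t : Cmod p < 1 -> u p t = (1 + p * cis t * u p t)%C.
Proof. intros Hp. unfold u. field. now apply u_denom_neq0. Qed.

Lemma continuous_u p t : Cmod p < 1 -> continuous (u p) t.
Proof.
  intros Hp. apply continuous_Cinv; [| now apply u_denom_neq0].
  apply continuous_Cplus; [apply continuous_const |].
  apply (continuous_opp (V:=C_R_NormedModule)).
  apply continuous_Cmult; [apply continuous_const | apply continuous_cis].
Qed.

(* [g] has vanishing moments of every positive order, i.e. no Fourier
   coefficients of negative index: the boundary behaviour of a function
   holomorphic in the disc. *)
Definition hardy (g : R -> C) : Prop :=
  forall n, (0 < n)%nat -> is_RInt (fun t => cis t ^ n * g t)%C 0 (2 * PI) (RtoC 0).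

Lemma hardy_const (c : C) : hardy (fun _ => c).
Proof.
  intros n Hn. eapply is_RInt_eq_val.
  - apply (is_RInt_ext (fun t => c * cis t ^ n)%C); [intros t _; apply Cmult_comm |].
    now apply is_RInt_Cmult_l, is_RInt_cis_pow.
  - apply Cmult_0_r.
Qed.

Lemma continuous_cis_pow_mult (h : R -> C) k t :
  continuous h t -> continuous (fun t => cis t ^ k * h t)%C t.
Proof.
  intros Hh. apply continuous_Cmult; [| exact Hh].
  induction k as [|k IH]; [apply continuous_const |].
  apply continuous_Cmult; [apply continuous_cis | exact IH].
Qed.

Section MultiplicationByU.

Variables (g : R -> C) (p : C).
Hypotheses (Hg_cont : forall t, continuous g t) (Hg : hardy g) (Hp : Cmod p < 1).

Let moment (h : R -> C) (k : nat) : C :=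
  RInt (V:=C_R_CompleteNormedModule) (fun t => cis t ^ k * h t)%C 0 (2 * PI).

Let gu (t : R) : C := (g t * u p t)%C.

Let gu_cont t : continuous gu t.
Proof. apply continuous_Cmult; [apply Hg_cont | now apply continuous_u]. Qed.

Let is_RInt_moment h k :
  (forall t, continuous h t) -> is_RInt (fun t => cis t ^ k * h t)%C 0 (2 * PI) (moment h k).
Proof. intros Hh. apply is_RInt_C_continuous. intros t. now apply continuous_cis_pow_mult. Qed.

Let moment_bounded h : (forall t, continuous h t) -> exists M, forall k, Cmod (moment h k) <= M.
Proof.
  intros Hh. assert (H2PI : 0 <= 2 * PI) by (pose proof PI_RGT_0; lra).
  destruct (continuous_Cmod_bounded h 0 (2 * PI) H2PI Hh) as [M HM].
  exists ((2 * PI - 0) * M). intros k.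
  apply (is_RInt_Cmod_le (fun t => cis t ^ k * h t)%C _ _ _ _ H2PI);
    [| now apply is_RInt_moment].
  intros t Ht. rewrite Cmod_mult, Cmod_pow, Cmod_cis, pow1, Rmult_1_l. now apply HM.
Qed.

Let moment_gu_rec k : moment gu k = (moment g k + p * moment gu (S k))%C.
Proof.
  apply (is_RInt_unique (V:=C_R_CompleteNormedModule)).
  apply (is_RInt_ext (fun t => cis t ^ k * g t + p * (cis t ^ S k * gu t))%C).
  - intros t _. symmetry. unfold gu. rewrite (u_expand p t Hp) at 1. rewrite Cpow_S.
    C_eq. ring.
  - apply is_RInt_Cplus; [| apply is_RInt_Cmult_l]; now apply is_RInt_moment.
Qed.

Let moment_gu k : moment gu k = moment g k.
Proof.
  destruct (moment_bounded gu gu_cont) as [M1 HM1].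
  destruct (moment_bounded g Hg_cont) as [M2 HM2].
  apply Ceq_minus. revert k.
  apply (geometric_recurrence_bounded_eq0 (fun k => moment gu k - moment g k)%C p (M1 + M2) Hp).
  - intros k. rewrite moment_gu_rec at 1.
    replace (moment g (S k)) with (RtoC 0)
      by (symmetry; apply (is_RInt_unique (V:=C_R_CompleteNormedModule)), Hg; lia).
    ring.
  - intros k. eapply Rle_trans; [apply Cmod_triangle |].
    rewrite Cmod_opp. now apply Rplus_le_compat.
Qed.

Lemma is_RInt_moment_mul_u k l :
  is_RInt (fun t => cis t ^ k * g t)%C 0 (2 * PI) l ->
  is_RInt (fun t => cis t ^ k * (g t * u p t))%C 0 (2 * PI) l.
Proof.
  intros Hl. eapply is_RInt_eq_val; [now apply (is_RInt_moment gu) |].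
  rewrite moment_gu. now apply (is_RInt_unique (V:=C_R_CompleteNormedModule)).
Qed.

Lemma hardy_mul_u : hardy (fun t => g t * u p t)%C.
Proof. intros n Hn. now apply is_RInt_moment_mul_u, Hg. Qed.

Lemma is_RInt_mul_u l :
  is_RInt g 0 (2 * PI) l -> is_RInt (fun t => g t * u p t)%C 0 (2 * PI) l.
Proof.
  intros Hl.
  apply (is_RInt_ext (fun t => cis t ^ 0 * (g t * u p t))%C); [intros t _; apply Cmult_1_l |].
  apply is_RInt_moment_mul_u.
  apply (is_RInt_ext g); [intros t _; symmetry; apply Cmult_1_l | exact Hl].
Qed.

End MultiplicationByU.

Lemma hardy_u p : Cmod p < 1 -> hardy (u p).
Proof.
  intros Hp n Hn. apply (is_RInt_ext (fun t => cis t ^ n * (1 * u p t))%C).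
  { intros t _. now rewrite Cmult_1_l. }
  apply (hardy_mul_u (fun _ => RtoC 1)); auto using continuous_const, hardy_const.
Qed.

Lemma is_RInt_u p : Cmod p < 1 -> is_RInt (u p) 0 (2 * PI) (RtoC (2 * PI)).
Proof.
  intros Hp. apply (is_RInt_ext (fun t => 1 * u p t)%C); [intros t _; apply Cmult_1_l |].
  apply is_RInt_mul_u; auto using continuous_const, hardy_const.
  eapply is_RInt_eq_val; [apply is_RInt_Cconst |].
  rewrite Rminus_0_r. apply Cmult_1_r.
Qed.

(** * The Poisson kernel *)

Definition poisson (a z : C) : R := (1 - Cmod a ^ 2) / Cmod (z - a) ^ 2.

Lemma cis_sub_neq0 t a : Cmod a < 1 -> (cis t - a)%C <> RtoC 0.
Proof.
  intros Ha E. apply Ceq_minus in E. subst a. rewrite Cmod_cis in Ha. lra.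
Qed.

Lemma poisson_cis a t :
  Cmod a < 1 -> RtoC (poisson a (cis t)) = (u (Cconj a) t + Cconj (u (Cconj a) t) - 1)%C.
Proof.
  intros Ha.
  assert (Hza : (cis t - a)%C <> RtoC 0) by now apply cis_sub_neq0.
  assert (Hd : Cmod (cis t - a) ^ 2 <> 0).
  { apply pow_nonzero. intro E. now apply Hza, Cmod_eq_0. }
  assert (Hu : (1 - Cconj a * cis t)%C <> RtoC 0)
    by (apply u_denom_neq0; rewrite Cmod_conj; exact Ha).
  unfold poisson, u. rewrite RtoC_div, RtoC_minus, !Cmod2_conj by exact Hd.
  rewrite Cinv_conj, !Cminus_conj, !Cmult_conj, Cconj_conj, Cconj_cis, Cconj_R by exact Hu.
  assert (Hz : cis t <> RtoC 0) by apply cis_neq0.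
  set (z := cis t) in *. clearbody z. clear Hd.
  field. repeat split; assumption.
Qed.

(* With [A := u (Cconj a)] and [B := u (Cconj b)], every summand on the right
   is a moment of positive order of [A B], [A], [B] or [1] (or the conjugate of
   one), or a combination of means: [A * Cconj B = (A + Cconj B - 1) / (1 - Cconj a * b)]
   on the circle. *)
Lemma circle_poisson_product_identity a b t : Cmod a < 1 -> Cmod b < 1 ->
  (cis t * (u (Cconj a) t + Cconj (u (Cconj a) t) - 1)
         * (u (Cconj b) t + Cconj (u (Cconj b) t) - 1))%C =
  (Cconj a * Cconj b * (cis t ^ 3 * (u (Cconj a) t * u (Cconj b) t))
   + Cconj (Cconj a * Cconj b * (cis t ^ 1 * (u (Cconj a) t * u (Cconj b) t)))
   - cis t ^ 1 * 1 + cis t ^ 1 * u (Cconj a) t + cis t ^ 1 * u (Cconj b) t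
   + b / (1 - Cconj a * b) * (u (Cconj a) t + Cconj (u (Cconj b) t) - 1)
   + a / (1 - a * Cconj b) * (u (Cconj b) t + Cconj (u (Cconj a) t) - 1))%C.
Proof.
  intros Ha Hb.
  assert (Hz : cis t <> RtoC 0) by apply cis_neq0.
  assert (Hua : (1 - Cconj a * cis t)%C <> RtoC 0)
    by (apply u_denom_neq0; rewrite Cmod_conj; exact Ha).
  assert (Hub : (1 - Cconj b * cis t)%C <> RtoC 0)
    by (apply u_denom_neq0; rewrite Cmod_conj; exact Hb).
  assert (Hab : (1 - Cconj a * b)%C <> RtoC 0)
    by (apply one_sub_neq0, Cmod_mult_lt1; [rewrite Cmod_conj |]; lra).
  assert (Hba : (1 - a * Cconj b)%C <> RtoC 0)
    by (apply one_sub_neq0, Cmod_mult_lt1; [| rewrite Cmod_conj]; lra).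
  assert (Hza : (cis t - a)%C <> RtoC 0) by now apply cis_sub_neq0.
  assert (Hzb : (cis t - b)%C <> RtoC 0) by now apply cis_sub_neq0.
  unfold u.
  rewrite !Cmult_conj, !Cinv_conj, !Cminus_conj, !Cmult_conj, !Cpow_conj, !Cconj_conj,
    !Cconj_cis, !Cconj_R by assumption.
  set (z := cis t) in *. clearbody z.
  field. repeat split; assumption.
Qed.

Lemma is_RInt_first_moment_poisson_product a b : Cmod a < 1 -> Cmod b < 1 ->
  is_RInt (fun t => cis t * RtoC (poisson a (cis t)) * RtoC (poisson b (cis t)))%C 0 (2 * PI)
    (RtoC (2 * PI) * (b / (1 - Cconj a * b) + a / (1 - a * Cconj b)))%C.
Proof.
  intros Ha Hb.
  assert (Ha' : Cmod (Cconj a) < 1) by now rewrite Cmod_conj.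
  assert (Hb' : Cmod (Cconj b) < 1) by now rewrite Cmod_conj.
  assert (HA : hardy (u (Cconj a))) by now apply hardy_u.
  assert (HB : hardy (u (Cconj b))) by now apply hardy_u.
  assert (HAB : hardy (fun t => u (Cconj a) t * u (Cconj b) t)%C)
    by (apply hardy_mul_u; auto; intros t; now apply continuous_u).
  assert (IA : is_RInt (u (Cconj a)) 0 (2 * PI) (RtoC (2 * PI))) by now apply is_RInt_u.
  assert (IB : is_RInt (u (Cconj b)) 0 (2 * PI) (RtoC (2 * PI))) by now apply is_RInt_u.
  eapply is_RInt_eq_val.
  - eapply is_RInt_ext.
    { intros t _. symmetry. rewrite !poisson_cis by assumption.
      apply circle_poisson_product_identity; assumption. }
    repeat match goal with
    | |- is_RInt (fun _ => (_ - _)%C) _ _ _ => apply is_RInt_Cminus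
    | |- is_RInt (fun _ => (_ + _)%C) _ _ _ => apply is_RInt_Cplus
    | |- is_RInt (fun _ => Cconj _) _ _ _ => apply is_RInt_Cconj
    | |- is_RInt (fun t => (cis t ^ _ * (u _ t * u _ t))%C) _ _ _ => apply HAB; lia
    | |- is_RInt (fun t => (cis t ^ _ * u (Cconj a) t)%C) _ _ _ => apply HA; lia
    | |- is_RInt (fun t => (cis t ^ _ * u (Cconj b) t)%C) _ _ _ => apply HB; lia
    | |- is_RInt (fun t => (cis t ^ _ * ?c)%C) _ _ _ => apply (hardy_const c); lia
    | |- is_RInt (u (Cconj a)) _ _ _ => exact IA
    | |- is_RInt (u (Cconj b)) _ _ _ => exact IB
    | |- is_RInt (fun _ => (?c * _)%C) _ _ _ => apply is_RInt_Cmult_l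
    | |- is_RInt (fun _ => ?c) _ _ _ => apply is_RInt_Cconst
    end.
  - rewrite (Cmult_0_r (Cconj a * Cconj b)), !Cconj_R, Rminus_0_r. C_eq. ring.
Qed.

Definition dens_scale (a b : C) : R :=
  1 / (2 * PI) * (Cmod (1 - a * Cconj b) ^ 2 / (1 - Cmod (a * Cconj b) ^ 2)).

Lemma dens_poisson a b z : dens a b z = dens_scale a b * poisson a z * poisson b z.
Proof. reflexivity. Qed.

Lemma dens_scale_pos a b : Cmod a < 1 -> Cmod b < 1 -> 0 < dens_scale a b.
Proof.
  intros Ha Hb. pose proof PI_RGT_0.
  assert (Hab : Cmod (a * Cconj b) < 1)
    by (apply Cmod_mult_lt1; [| rewrite Cmod_conj]; lra).
  assert (Hn : 0 < Cmod (1 - a * Cconj b)) by now apply Cmod_gt_0, one_sub_neq0.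
  pose proof (Cmod_ge_0 (a * Cconj b)).
  unfold dens_scale. apply Rmult_lt_0_compat; apply Rdiv_lt_0_compat; nra.
Qed.

Lemma expect_poisson a b : Cmod a < 1 -> Cmod b < 1 ->
  expect a b =
  (RtoC (dens_scale a b)
   * (RtoC (2 * PI) * (b / (1 - Cconj a * b) + a / (1 - a * Cconj b))))%C.
Proof.
  intros Ha Hb. apply (is_RInt_unique (V:=C_R_CompleteNormedModule)).
  eapply is_RInt_ext; [| now apply is_RInt_Cmult_l, is_RInt_first_moment_poisson_product].
  intros t _. rewrite dens_poisson, !RtoC_mult. C_eq. ring.
Qed.

Lemma disc_pair_sum_eq0_iff (a b : C) : Cmod a < 1 -> Cmod b < 1 ->
  (b / (1 - Cconj a * b) + a / (1 - a * Cconj b))%C = RtoC 0 <-> a = (- b)%C.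
Proof.
  intros Ha Hb.
  assert (Hab : (1 - Cconj a * b)%C <> RtoC 0)
    by (apply one_sub_neq0, Cmod_mult_lt1; [rewrite Cmod_conj |]; lra).
  assert (Hba : (1 - a * Cconj b)%C <> RtoC 0)
    by (apply one_sub_neq0, Cmod_mult_lt1; [| rewrite Cmod_conj]; lra).
  pose proof (Cmod_ge_0 a). pose proof (Cmod_ge_0 b).
  split.
  - intros E.
    assert (Hlin : (a * RtoC (1 - Cmod b ^ 2))%C = (- b * RtoC (1 - Cmod a ^ 2))%C).
    { rewrite !RtoC_minus, !Cmod2_conj. apply Ceq_minus.
      replace (a * (1 - b * Cconj b) - - b * (1 - a * Cconj a))%C
        with ((b / (1 - Cconj a * b) + a / (1 - a * Cconj b))
              * ((1 - Cconj a * b) * (1 - a * Cconj b)))%C by (field; auto).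
      rewrite E. ring. }
    assert (Hmod : Cmod a = Cmod b).
    { pose proof (f_equal Cmod Hlin) as Hm.
      rewrite !Cmod_mult, Cmod_opp, !Cmod_R, !Rabs_pos_eq in Hm by nra.
      assert (Hf : (Cmod a - Cmod b) * (1 + Cmod a * Cmod b) = 0) by nra.
      apply Rmult_integral in Hf as [Hf | Hf]; nra. }
    rewrite Hmod in Hlin.
    assert (Hs : RtoC (1 - Cmod b ^ 2) <> RtoC 0) by (intro E0; injection E0; nra).
    replace a with (a * RtoC (1 - Cmod b ^ 2) / RtoC (1 - Cmod b ^ 2))%C by (field; exact Hs).
    rewrite Hlin. field. exact Hs.
  - intros ->. rewrite Copp_conj in Hab |- *.
    field. exact Hba.
Qed.

Theorem corollary1 (phi1 phi2 : C) :
  in_disc phi1 -> in_disc phi2 ->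
  (expect phi1 phi2 = RtoC 0 <-> phi1 = Copp phi2).
Proof.
  unfold in_disc. intros H1 H2.
  rewrite expect_poisson, <- disc_pair_sum_eq0_iff, Cmult_assoc, <- RtoC_mult by assumption.
  apply Cmult_eq0_iff_r.
  pose proof (dens_scale_pos phi1 phi2 H1 H2). pose proof PI_RGT_0.
  intro E. injection E. nra.
Qed.
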